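(* Let $V_0\subseteq\mathbb{R}^n$ be a finite set, $\mathcal{K}$ a compact topological space, and for each $v\in V_0$ let $r_v:\mathcal{K}\to[-\infty,\infty)$ be continuous. For $\kappa\in\mathcal{K}$ set $f_\kappa(x)=\max_{v\in V_0}(\langle x,v\rangle+r_v(\kappa))$ for $x\in\mathbb{R}^n$, and assume that for every $\kappa$ the set $V_\kappa=\{v\in V_0:r_v(\kappa)>-\infty\}$ is nonempty (so $f_\kappa$ is real-valued) and that the point $u$ of minimal Euclidean norm in $\operatorname{conv}(V_\kappa)$ is the same for all $\kappa\in\mathcal{K}$. Then there is $C\in\mathbb{R}$ such that $f_\kappa(x)\ge\langle x,u\rangle+C$ for all $\kappa\in\mathcal{K}$ and all $x\in\mathbb{R}^n$.
   Context: $[-\infty,\infty)$ carries its usual order topology. *)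

From HB Require Import structures.
From mathcomp Require Import all_boot all_order all_algebra.
From mathcomp Require Import all_classical all_reals all_analysis.
Set Implicit Arguments. Unset Strict Implicit. Unset Printing Implicit Defensive.
Import Order.TTheory GRing.Theory Num.Theory.
Local Open Scope classical_set_scope.
Local Open Scope ring_scope.

Definition dotp (R : realType) (n : nat) (x y : 'rV[R]_n) : R :=
  \sum_(i < n) x ord0 i * y ord0 i.

Definition enorm (R : realType) (n : nat) (x : 'rV[R]_n) : R :=
  Num.sqrt (dotp x x).

Definition conv_hull (R : realType) (n : nat) (S : set 'rV[R]_n)
  : set 'rV[R]_n :=
  [set x | exists (m : nat) (w : 'I_m -> R) (p : 'I_m -> 'rV[R]_n),
     [/\ (forall i, 0 <= w i), \sum_(i < m) w i = 1,
         (forall i, S (p i)) & x = \sum_(i < m) w i *: p i]].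

Definition fmax (R : realType) (n : nat) (K : Type) (V0 : seq 'rV[R]_n)
  (r : 'rV[R]_n -> K -> \bar R) (k : K) (x : 'rV[R]_n) : \bar R :=
  \big[Order.max/-oo%E]_(v <- V0) ((dotp x v)%:E + r v k)%E.

Definition Vk (R : realType) (n : nat) (K : Type) (V0 : seq 'rV[R]_n)
  (r : 'rV[R]_n -> K -> \bar R) (k : K) : set 'rV[R]_n :=
  [set v | v \in V0 /\ (-oo < r v k)%E].

From HB Require Import structures.
From mathcomp Require Import all_boot all_order all_algebra.
From mathcomp Require Import all_classical all_reals all_analysis.
Import Order.TTheory GRing.Theory Num.Theory.
Local Open Scope classical_set_scope.
Local Open Scope ring_scope.

(* Only [u \in conv (V_k)] is needed, not the minimality of its norm.  Writing
   [u = \sum_j w_j p_j] with [p_j \in V_k], the weighted average of the affine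
   pieces indexed by the [p_j] gives [f_k' x >= <x,u> + \sum_j w_j a_j] whenever
   [a_j <= r_{p_j}(k')]; taking [a_j] just below the finite values
   [r_{p_j}(k)], continuity makes this hold for all [k'] near [k], and
   compactness of [K] turns these local constants into a uniform one. *)

Lemma compact_uniform_bound (R : realType) (K : topologicalType)
    (P : R -> K -> Prop) :
  compact [set: K] ->
  (forall c d k, c <= d -> P c k -> P d k) ->
  (forall k : K, exists c, \forall k' \near k, P c k') ->
  exists c, forall k, P c k.
Proof.
move=> cK Pmono Ploc.
have [M [_ PM]] : \forall c \near +oo, [set: K] `<=` P c.
  apply: (proj1 (compact_near_coveringP _) cK R (pinfty_nbhs R) P _) => k _.
  have [c Pc] := Ploc k.
  near=> k' d.
  apply: (Pmono c) => /=; first by near: d; exact: nbhs_pinfty_ge (num_real _).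
  by near: k'.
by exists (M + 1) => k; apply: (PM (M + 1)); rewrite ?ltrDl.
Unshelve. all: end_near. Qed.

Lemma continuous_ereal_near_gt {R : realType} {K : topologicalType}
    {g : K -> \bar R} {k : K} {a : \bar R} :
  {for k, continuous g} -> (a < g k)%E -> \forall k' \near k, (a < g k')%E.
Proof. by move=> gc /open_ereal_gt' /gc. Qed.

Lemma convex_comb_le (R : realFieldType) m (w b : 'I_m -> R) (y : R) :
  (forall j, 0 <= w j) -> \sum_j w j = 1 -> (forall j, b j <= y) ->
  \sum_j w j * b j <= y.
Proof.
move=> w0 w1 b_le.
rewrite -[leRHS]mul1r -w1 mulr_suml.
by apply: ler_sum => j _; rewrite ler_wpM2l.
Qed.

Section MaxAffine.
Variables (R : realType) (n : nat) (K : Type).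
Variables (V0 : seq 'rV[R]_n) (r : 'rV[R]_n -> K -> \bar R).

Lemma dotp_sumr m (w : 'I_m -> R) (p : 'I_m -> 'rV[R]_n) (x : 'rV[R]_n) :
  dotp x (\sum_j w j *: p j) = \sum_j w j * dotp x (p j).
Proof.
rewrite /dotp.
under eq_bigr => i _ do rewrite summxE mulr_sumr.
rewrite exchange_big /=; apply: eq_bigr => j _.
rewrite mulr_sumr; apply: eq_bigr => i _.
by rewrite mxE mulrCA.
Qed.

Lemma le_fmax k x {v} :
  v \in V0 -> ((dotp x v)%:E + r v k <= fmax V0 r k x)%E.
Proof. by move=> vV0; exact: (le_bigmax_seq _ _ xpredT _ vV0). Qed.

Lemma conv_comb_le_fmax k x m (w : 'I_m -> R) (p : 'I_m -> 'rV[R]_n)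
    (a : 'I_m -> R) :
  (forall j, 0 <= w j) -> \sum_j w j = 1 -> (forall j, p j \in V0) ->
  (forall j, ((a j)%:E <= r (p j) k)%E) ->
  ((dotp x (\sum_j w j *: p j) + \sum_j w j * a j)%:E <= fmax V0 r k x)%E.
Proof.
move=> w0 w1 pV ar.
have term_le j : ((dotp x (p j) + a j)%:E <= fmax V0 r k x)%E.
  by apply: le_trans _ (le_fmax k x (pV j)); rewrite EFinD leeD2l.
have [j0 _|no_index] := pickP (@predT 'I_m); last first.
  by move: w1; rewrite big_pred0 // => /eqP; rewrite eq_sym oner_eq0.
case fE: (fmax V0 r k x) => [y| |]; last 2 first.
- by rewrite leey.
- by have := term_le j0; rewrite fE.
rewrite lee_fin dotp_sumr -big_split /=.
under eq_bigr do rewrite -mulrDr.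
by apply: convex_comb_le => // j; have := term_le j; rewrite fE lee_fin.
Qed.

End MaxAffine.

Lemma fmax_locally_bounded_below (R : realType) (n : nat)
    (K : topologicalType) (V0 : seq 'rV[R]_n) (r : 'rV[R]_n -> K -> \bar R)
    (u : 'rV[R]_n) (k : K) :
  (forall v, v \in V0 -> continuous (r v)) ->
  (forall v, v \in V0 -> r v k != +oo%E) ->
  conv_hull (Vk V0 r k) u ->
  exists c : R, \forall k' \near k, forall x,
    ((dotp x u - c)%:E <= fmax V0 r k' x)%E.
Proof.
move=> rc rfin [m [w [p [w0 w1 pV ->]]]].
pose a j := fine (r (p j) k) - 1.
have a_lt j : ((a j)%:E < r (p j) k)%E.
  have [pV0 r_gt] := pV j.
  have : r (p j) k \is a fin_num by rewrite fin_numE rfin // (gt_eqF r_gt).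
  by rewrite /a; case: (r (p j) k) => //= y _; rewrite lte_fin ltrBlDr ltrDl.
have near_a : \forall k' \near k, forall j, ((a j)%:E <= r (p j) k')%E.
  apply: filter_forall => j.
  move: (continuous_ereal_near_gt (rc _ (pV j).1 k) (a_lt j)).
  by apply: filterS => k'; exact: ltW.
exists (- \sum_j w j * a j); move: near_a; apply: filterS => k' a_le x.
by rewrite opprK; apply: conv_comb_le_fmax => // j; exact: (pV j).1.
Qed.

Theorem lemma4p9 (R : realType) (n : nat) (K : topologicalType)
  (V0 : seq 'rV[R]_n) (r : 'rV[R]_n -> K -> \bar R) (u : 'rV[R]_n) :
  compact [set: K] ->
  (forall v, v \in V0 -> continuous (r v)) ->
  (forall v k, v \in V0 -> r v k != +oo%E) ->
  (forall k, Vk V0 r k !=set0) ->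
  (forall k, conv_hull (Vk V0 r k) u /\
     (forall w, conv_hull (Vk V0 r k) w -> enorm u <= enorm w)) ->
  exists C : R, forall (k : K) (x : 'rV[R]_n),
    ((dotp x u + C)%:E <= fmax V0 r k x)%E.
Proof.
move=> cK rc rfin _ hu.
pose P c k := forall x, ((dotp x u - c)%:E <= fmax V0 r k x)%E.
have [C PC] : exists C, forall k, P C k.
  apply: compact_uniform_bound cK _ _ => [c d k le_cd Pc x|k].
    by apply: le_trans (Pc x); rewrite lee_fin lerD2l lerN2.
  apply: fmax_locally_bounded_below => [//|v vV0|]; first exact: rfin.
  exact: (hu k).1.
by exists (- C).
Qed.
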